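(* Let $M$ be a tame paving matroid of rank $n$ on $[d]$ and let $\mathcal{Q}=\{Q_1,\ldots,Q_k\}$ be a partition of its set of dependent hyperplanes. Then $M(\mathcal{Q})\ge M$, i.e., every dependent set of $M$ is dependent in $M(\mathcal{Q})$.
   Context: A matroid of rank $n$ is paving if every circuit has size $n$ or $n+1$; a dependent hyperplane is a maximal subset of size at least $n$ all of whose $n$-element subsets are circuits; a paving matroid is tame if any three distinct dependent hyperplanes have empty intersection. Quasi-paving construction: for $n\le d$ and a collection $\mathcal{H}$ of subsets of $[d]$ any three of which have empty intersection, the matroid on $[d]$ whose circuits are (Type 1) the $(n-1)$-subsets contained in the intersection of two distinct members of $\mathcal{H}$, (Type 2) the $n$-subsets of a member of $\mathcal{H}$ containing no Type 1 set, (Type 3) the $(n+1)$-subsets containing no Type 1 or Type 2 set. For a partition $\mathcal{Q}=\{Q_1,\ldots,Q_k\}$ of the dependent hyperplanes of $M$, set $H_i=\bigcup_{l\in Q_i}l$ and let $M(\mathcal{Q})$ be the matroid obtained from the quasi-paving construction applied to $\mathcal{H}=\{H_1,\ldots,H_k\}$ and the integer $n$ (each element lies in at most two $H_i$ since $M$ is tame). *)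

From mathcomp Require Import all_boot.
Set Implicit Arguments. Unset Strict Implicit. Unset Printing Implicit Defensive.

Section Matroids.
Variable T : finType.

Definition is_matroid (I : {set {set T}}) : Prop :=
  [/\ set0 \in I,
      (forall A B : {set T}, B \in I -> A \subset B -> A \in I) &
      (forall A B : {set T}, A \in I -> B \in I -> #|A| < #|B| ->
         exists2 x, x \in B :\: A & x |: A \in I)].

Definition mrank (I : {set {set T}}) : nat := \max_(A in I) #|A|.

Definition circuit (I : {set {set T}}) (C : {set T}) : bool :=
  (C \notin I) && [forall D : {set T}, (D \proper C) ==> (D \in I)].

Definition paving (I : {set {set T}}) (n : nat) : Prop :=
  forall C : {set T}, circuit I C -> (#|C| == n) || (#|C| == n.+1).

Definition hyp_cand (I : {set {set T}}) (n : nat) (H : {set T}) : bool :=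
  (n <= #|H|) &&
  [forall S : {set T}, ((S \subset H) && (#|S| == n)) ==> circuit I S].

Definition dep_hyperplanes (I : {set {set T}}) (n : nat) : {set {set T}} :=
  [set H | maxset (hyp_cand I n) H].

Definition tame (I : {set {set T}}) (n : nat) : Prop :=
  forall H1 H2 H3 : {set T},
    H1 \in dep_hyperplanes I n -> H2 \in dep_hyperplanes I n ->
    H3 \in dep_hyperplanes I n ->
    H1 != H2 -> H1 != H3 -> H2 != H3 -> H1 :&: H2 :&: H3 = set0.

(* Quasi-paving construction M(Q) for a partition Q of the dependent
   hyperplanes: the members of the collection are H_i = cover Q_i,
   indexed by the blocks Q_i of Q. *)
Definition qp_type1 (n : nat) (Q : {set {set {set T}}}) (C : {set T}) : bool :=
  (#|C| == n.-1) &&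
  [exists Qi in Q, exists Qj in Q,
     (Qi != Qj) && (C \subset cover Qi :&: cover Qj)].

Definition qp_type2 (n : nat) (Q : {set {set {set T}}}) (C : {set T}) : bool :=
  (#|C| == n) && [exists Qi in Q, C \subset cover Qi] &&
  [forall D : {set T}, (D \subset C) ==> ~~ qp_type1 n Q D].

Definition qp_type3 (n : nat) (Q : {set {set {set T}}}) (C : {set T}) : bool :=
  (#|C| == n.+1) &&
  [forall D : {set T}, (D \subset C) ==>
     ~~ (qp_type1 n Q D || qp_type2 n Q D)].

Definition qp_circuit (n : nat) (Q : {set {set {set T}}}) (C : {set T}) : bool :=
  [|| qp_type1 n Q C, qp_type2 n Q C | qp_type3 n Q C].

Definition qp_dependent (n : nat) (Q : {set {set {set T}}}) (X : {set T}) : bool :=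
  [exists C : {set T}, (C \subset X) && qp_circuit n Q C].

End Matroids.

(* A dependent set X of M contains a circuit C of M, of size n or n+1 since M
   is paving.  If |C| = n+1, then C is a Type 3 circuit of M(Q) unless it
   already contains one of Type 1 or 2.  If |C| = n, then C is contained in a
   dependent hyperplane, hence in the union H_i of the block Q_i containing
   it, so C is a Type 2 circuit of M(Q) unless it contains one of Type 1.
   Either way X contains a circuit of M(Q).  The matroid axioms, the rank and
   tameness are only needed for M(Q) to be a matroid, not for this comparison. *)
From mathcomp Require Import all_boot.

Set Implicit Arguments.
Unset Strict Implicit.
Unset Printing Implicit Defensive.

Section MatroidCircuits.
Variables (T : finType) (I : {set {set T}}).

Lemma dependent_sub_circuit (X : {set T}) :
  X \notin I -> exists2 C : {set T}, C \subset X & circuit I C.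
Proof.
move=> XnI.
have [C /minsetP [CnI Cmin] CX] :=
  minset_exists (P := [pred D : {set T} | D \notin I]) XnI.
exists C => //; rewrite /circuit; move: CnI; rewrite /= => -> /=.
apply/forallP => D; apply/implyP => DC; apply/negPn/negP => DnI.
by move: (DC); rewrite (Cmin D DnI (proper_sub DC)) properxx.
Qed.

Lemma circuit_hyp_cand (n : nat) (C : {set T}) :
  circuit I C -> #|C| = n -> hyp_cand I n C.
Proof.
move=> Ccirc Csz; rewrite /hyp_cand Csz leqnn /=.
apply/forallP => S; apply/implyP => /andP [SC /eqP Ssz].
have -> : S = C by apply/eqP; rewrite eqEcard SC Ssz Csz leqnn.
exact: Ccirc.
Qed.

Lemma hyp_cand_sub_dep_hyperplane (n : nat) (H : {set T}) :
  hyp_cand I n H ->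
  exists2 H' : {set T}, H' \in dep_hyperplanes I n & H \subset H'.
Proof.
move=> candH; have [H' maxH' HH'] := maxset_exists candH.
by exists H'; rewrite // inE.
Qed.

End MatroidCircuits.

Lemma partition_sub_cover (T : finType) (P : {set {set {set T}}})
    (D : {set {set T}}) (H : {set T}) :
  partition P D -> H \in D ->
  exists2 B : {set {set T}}, B \in P & H \subset cover B.
Proof.
case/andP => /eqP coverP _; rewrite -coverP => /bigcupP [B BP HB].
by exists B => //; apply: bigcup_sup HB.
Qed.

Section QuasiPavingCircuits.
Variables (T : finType) (n : nat) (Q : {set {set {set T}}}).

Lemma qp_dependentS (X Y : {set T}) :
  X \subset Y -> qp_dependent n Q X -> qp_dependent n Q Y.
Proof.
move=> XY /existsP [C /andP [CX Ccirc]].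
by apply/existsP; exists C; rewrite (subset_trans CX XY).
Qed.

Lemma qp_dependent_circuit (C : {set T}) :
  qp_circuit n Q C -> qp_dependent n Q C.
Proof. by move=> Ccirc; apply/existsP; exists C; rewrite subxx. Qed.

Lemma qp_dependent_card_succ (C : {set T}) :
  #|C| = n.+1 -> qp_dependent n Q C.
Proof.
move=> Csz.
have [/existsP [D /andP [DC D12]] | no12] :=
  boolP [exists D : {set T}, (D \subset C) && (qp_type1 n Q D || qp_type2 n Q D)].
  apply: qp_dependentS DC _; apply: qp_dependent_circuit.
  by rewrite /qp_circuit; case/orP: D12 => ->; rewrite ?orbT.
apply/qp_dependent_circuit/or3P/Or33; rewrite /qp_type3 Csz eqxx /=.
apply/forallP => D; apply/implyP => DC.
by move: no12; rewrite negb_exists => /forallP /(_ D); rewrite DC.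
Qed.

Lemma qp_dependent_sub_cover (C : {set T}) (Qi : {set {set T}}) :
  #|C| = n -> Qi \in Q -> C \subset cover Qi -> qp_dependent n Q C.
Proof.
move=> Csz QiQ CQi.
have [/existsP [D /andP [DC D1]] | no1] :=
  boolP [exists D : {set T}, (D \subset C) && qp_type1 n Q D].
  by apply: qp_dependentS DC _; apply: qp_dependent_circuit; rewrite /qp_circuit D1.
apply/qp_dependent_circuit/or3P/Or32; rewrite /qp_type2 Csz eqxx /=.
apply/andP; split; first by apply/existsP; exists Qi; rewrite QiQ.
apply/forallP => D; apply/implyP => DC.
by move: no1; rewrite negb_exists => /forallP /(_ D); rewrite DC.
Qed.

End QuasiPavingCircuits.

Theorem lemma4p3 (d n : nat) (I : {set {set 'I_d}})
  (Q : {set {set {set 'I_d}}}) :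
  is_matroid I -> mrank I = n -> paving I n -> tame I n ->
  partition Q (dep_hyperplanes I n) ->
  forall X : {set 'I_d}, X \notin I -> qp_dependent n Q X.
Proof.
move=> _ _ pavI _ partQ X XnI.
have [C CX Ccirc] := dependent_sub_circuit XnI.
apply: qp_dependentS CX _.
case/orP: (pavI C Ccirc) => /eqP Csz; last exact: qp_dependent_card_succ.
have [H Hdep CH] := hyp_cand_sub_dep_hyperplane (circuit_hyp_cand Ccirc Csz).
have [Qi QiQ HQi] := partition_sub_cover partQ Hdep.
exact: qp_dependent_sub_cover Csz QiQ (subset_trans CH HQi).
Qed.
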